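(* In the model of the context, suppose $F_e$ is an equilibrium arrival distribution for the variant in which walk-ins may only arrive in $[0,T]$, and suppose $F_e$ has no atom at $0$. Then $F_e$ is also an equilibrium arrival distribution for the variant in which walk-ins may arrive at any time in $(-\infty,T]$.
   Context: Model: single server that starts serving at time $0$ (no service before $0$; in the early-arrival variant, walk-ins arriving before $0$ queue in arrival order), walk-ins admitted up to time $T$, service times i.i.d. exponential with rate $\mu$, $M$ scheduled customers at deterministic times $0\le\tau_1<\dots<\tau_M\le T$ with non-preemptive priority over walk-ins (otherwise FCFS; simultaneous walk-ins ordered uniformly at random), Poisson($\lambda$) number of walk-ins each independently choosing its arrival time from a common cdf $F$ on the admissible set ($[0,T]$ or $(-\infty,T]$). Waiting time = time from arrival until start of service; $E_w(t)$ is the expected waiting time of a walk-in arriving at $t$ when all others use $F$. $F_e$ is an equilibrium arrival distribution (for a given admissible set) if there is a constant $E_w$ with $E_w(t)=E_w$ on the support of $F_e$ and $E_w(t)\ge E_w$ at every admissible $t$ outside it. An atom at $0$ means $F_e(0)>0$. *)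

From HB Require Import structures.
From mathcomp Require Import all_boot all_order all_algebra.
From mathcomp Require Import all_classical all_reals all_analysis.
Set Implicit Arguments. Unset Strict Implicit. Unset Printing Implicit Defensive.
Import Order.TTheory GRing.Theory Num.Theory.
Local Open Scope classical_set_scope.
Local Open Scope ring_scope.

(* A customer: arrival time, scheduled (priority) flag, tie-breaking key
   (uniform random rank among simultaneous walk-ins), service time. *)
Record cust (R : realType) := Cust
  { c_arr : R; c_sched : bool; c_tie : R; c_serv : R }.

Definition cdef (R : realType) : cust R := Cust 0 false 0 0.

Definition cprec (R : realType) (c d : cust R) : bool :=
  (c_sched c && ~~ c_sched d) ||
  ((c_sched c == c_sched d) &&
   ((c_arr c < c_arr d) || ((c_arr c == c_arr d) && (c_tie c < c_tie d)))).

Definition pick (R : realType) (cs : seq (cust R)) (cands : seq nat) : option nat :=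
  foldr (fun i acc => match acc with
                      | None => Some i
                      | Some j => if cprec (nth (cdef R) cs i) (nth (cdef R) cs j)
                                  then Some i else Some j
                      end) None cands.

Definition min_arr (R : realType) (cs : seq (cust R)) (us : seq nat) : R :=
  foldr (fun i m => Num.min (c_arr (nth (cdef R) cs i)) m)
        (c_arr (nth (cdef R) cs (head 0%N us))) us.

(* Start-of-service time of customer k.  [clock] is the time at which the
   server becomes free, [us] the unserved customers. *)
Fixpoint start_time (R : realType) (cs : seq (cust R)) (fuel : nat) (clock : R)
    (us : seq nat) (k : nat) : R :=
  match fuel with
  | 0 => clock
  | f.+1 =>
    let clk := if has (fun i => c_arr (nth (cdef R) cs i) <= clock) us
               then clock else min_arr cs us in
    match pick cs [seq i <- us | c_arr (nth (cdef R) cs i) <= clk] with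
    | None => clk
    | Some i => if i == k then clk
                else start_time cs f (clk + c_serv (nth (cdef R) cs i)) (rem i us) k
    end
  end.

(* Waiting time of the tagged walk-in arriving at t with tie key u0, given
   the other walk-ins (arrival, tie key, service) and the service times ss of
   the scheduled customers arriving at times tau.  The server opens at 0. *)
Definition wait_time (R : realType) (tau ss : seq R) (t u0 : R)
    (walkins : seq (R * R * R)) : R :=
  let cs := Cust t false u0 0
            :: [seq Cust w.1.1 false w.1.2 w.2 | w <- walkins]
            ++ [seq Cust p.1 true 0 p.2 | p <- zip tau ss] in
  start_time cs (size cs) 0 (iota 0 (size cs)) 0%N - t.

Local Open Scope ereal_scope.

Definition exp_int (R : realType) (mu : R) (g : R -> \bar R) : \bar R :=
  \int[lebesgue_measure]_(s in [set s : R | (0 <= s)%R])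
     ((mu * expR (- (mu * s)))%:E * g s).

Definition unif_int (R : realType) (g : R -> \bar R) : \bar R :=
  \int[lebesgue_measure]_(u in [set u : R | (0 <= u <= 1)%R]) g u.

Fixpoint walkin_int (R : realType) (P : probability R R) (mu : R) (n : nat)
    (g : seq (R * R * R) -> \bar R) : \bar R :=
  match n with
  | 0 => g [::]
  | n'.+1 => \int[P]_a unif_int (fun u => exp_int mu (fun s =>
               walkin_int P mu n' (fun w => g ((a, u, s) :: w))))
  end.

Fixpoint sched_int (R : realType) (mu : R) (m : nat) (g : seq R -> \bar R) : \bar R :=
  match m with
  | 0 => g [::]
  | m'.+1 => exp_int mu (fun s => sched_int mu m' (fun l => g (s :: l)))
  end.

Definition Ew (R : realType) (lambda mu : R) (tau : seq R) (P : probability R R)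
    (t : R) : \bar R :=
  \sum_(0 <= n <oo)
    ((expR (- lambda) * lambda ^+ n / (n`!)%:R)%:E *
     unif_int (fun u0 => sched_int mu (size tau) (fun ss =>
        walkin_int P mu n (fun w => (wait_time tau ss t u0 w)%:E)))).

Definition dist_support (R : realType) (P : probability R R) : set R :=
  [set x | forall e : R, (0 < e)%R -> 0 < P `](x - e)%R, (x + e)%R[%classic].

Definition is_equilibrium (R : realType) (lambda mu : R) (tau : seq R)
    (P : probability R R) (A : set R) : Prop :=
  P (~` A) = 0 /\
  exists Ew0 : R,
    (forall t, dist_support P t -> Ew lambda mu tau P t = Ew0%:E) /\
    (forall t, A t -> ~ dist_support P t -> Ew0%:E <= Ew lambda mu tau P t).

From Pilot Require Import Defs.
From HB Require Import structures.
From mathcomp Require Import all_boot all_order all_algebra.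
From mathcomp Require Import all_classical all_reals all_analysis.
Import Order.TTheory GRing.Theory Num.Theory.
Local Open Scope classical_set_scope.
Local Open Scope ring_scope.
Set Implicit Arguments. Unset Strict Implicit.

(* A walk-in arriving at t <= 0 meets exactly the sample path of a walk-in
   arriving at 0 with the same tie key: the server only opens at 0, every
   other walk-in arrives after 0 (the arrival law has no mass on ]-oo, 0])
   and scheduled customers outrank walk-ins anyway.  So its start of service
   is the same and its waiting time is larger by -t, whence
   E_w(t) >= E_w(0) >= E_w.  Hence no t < 0 is a profitable deviation and the
   equilibrium on [0, T] stays one on ]-oo, T]. *)

Lemma mem_rem_neq (T : eqType) (x y : T) (s : seq T) :
  x != y -> x \in s -> x \in rem y s.
Proof.
move=> xy; elim: s => [|a s IH] //=; rewrite in_cons => /orP[/eqP <-|xs].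
  by rewrite (negbTE xy) mem_head.
by case: ifP => _ //; rewrite in_cons IH ?orbT.
Qed.

Lemma foldr_min_mem (R : realType) (f : nat -> R) (d : R) (l : seq nat) :
  foldr (fun i m => Num.min (f i) m) d l = d \/
  exists2 j, j \in l & foldr (fun i m => Num.min (f i) m) d l = f j.
Proof.
elim: l => [|a l IH] /=; first by left.
rewrite /Num.min; case: ifP => _; first by right; exists a; rewrite ?mem_head.
case: IH => [->|[j jl ->]]; first by left.
by right; exists j; rewrite // in_cons jl orbT.
Qed.

Section Dynamics.
Variable R : realType.
Implicit Types (cs : seq (cust R)) (us : seq nat) (t clock : R).

Local Notation nthc cs i := (nth (cdef R) cs i).

Lemma pick_mem cs l i : Defs.pick cs l = Some i -> i \in l.
Proof.
elim: l i => [|a l IH] i //=.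
case E: (Defs.pick cs l) => [j|] /=; last by case=> <-; rewrite mem_head.
by case: ifP => _ [<-]; rewrite ?mem_head // in_cons (IH _ E) orbT.
Qed.

Lemma pick_cons_some cs a l : exists i, Defs.pick cs (a :: l) = Some i.
Proof.
rewrite /=; case: (Defs.pick cs l) => [j|]; last by exists a.
by case: ifP => _; eexists.
Qed.

Lemma eq_in_pick cs cs' l :
  {in l &, forall i j, cprec (nthc cs i) (nthc cs j) = cprec (nthc cs' i) (nthc cs' j)} ->
  Defs.pick cs l = Defs.pick cs' l.
Proof.
elim: l => [|a l IH] //= H.
rewrite -IH; last by move=> i j il jl; apply: H; rewrite in_cons ?il ?jl orbT.
case E: (Defs.pick cs l) => [j|] //.
by rewrite H ?mem_head // in_cons (pick_mem E) orbT.
Qed.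

Lemma min_arr_mem cs us : us != [::] ->
  exists2 j, j \in us & min_arr cs us = c_arr (nthc cs j).
Proof.
case: us => [|a l] // _; rewrite /min_arr.
case: (foldr_min_mem (fun i => c_arr (nthc cs i)) (c_arr (nthc cs a)) (a :: l))
  => [->|[j jl ->]]; last by exists j.
by exists a; rewrite ?mem_head.
Qed.

(* The recursion stops at the latest when the tagged customer 0 is picked,
   and that only happens once it has arrived. *)
Lemma arr_le_start_time cs fuel clock us :
  0%N \in us -> (size us <= fuel)%N ->
  c_arr (nthc cs 0) <= start_time cs fuel clock us 0.
Proof.
elim: fuel clock us => [|f IH] clock us u0 sz; first by case: us u0 sz.
rewrite /=; set clk := (if has _ _ then _ else _).
have [j ju jc] : exists2 j, j \in us & c_arr (nthc cs j) <= clk.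
  rewrite /clk; case: ifP => [/hasP [j ju jc]|_]; first by exists j.
  have [|j ju ->] := @min_arr_mem cs us; first by case: (us) u0.
  by exists j.
set L := [seq i <- us | _].
have [i E] : exists i, Defs.pick cs L = Some i.
  have : j \in L by rewrite mem_filter jc.
  by case: (L) => // a l _; exact: pick_cons_some.
have := pick_mem E; rewrite E mem_filter => /andP[ic iu].
case: ifP => [/eqP <-|i0] //.
apply: IH; first by apply: mem_rem_neq; rewrite // eq_sym i0.
by rewrite size_rem //; case: (size us) sz.
Qed.

(* Customers that cannot compete with a walk-in arriving at or before the
   opening time 0: scheduled ones, and walk-ins arriving strictly after 0. *)
Definition post_opening (c : cust R) :=
  (0 <= c_serv c) && (c_sched c || (0 < c_arr c)).

Lemma cprec_tagged t u0 d : t <= 0 -> post_opening d ->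
  cprec (Cust t false u0 0) d = cprec (Cust 0 false u0 0) d /\
  cprec d (Cust t false u0 0) = cprec d (Cust 0 false u0 0).
Proof.
move=> t0 /andP[_ /orP[sd|ad]]; rewrite /cprec /= ?sd //=.
have td : t < c_arr d by apply: le_lt_trans ad.
have [dt d0] : (c_arr d < t = false) /\ (c_arr d < 0 = false).
  by rewrite !ltNge (ltW td) (ltW ad).
by rewrite td ad dt d0 ?(lt_eqF td, gt_eqF td, lt_eqF ad, gt_eqF ad).
Qed.

Lemma start_time_tagged cs cs' t u0 fuel clock us : t <= 0 ->
  nthc cs 0 = Cust t false u0 0 -> nthc cs' 0 = Cust 0 false u0 0 ->
  (forall i, i != 0%N -> nthc cs i = nthc cs' i) ->
  {in us, forall i, i != 0%N -> post_opening (nthc cs i)} ->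
  0 <= clock -> 0%N \in us ->
  start_time cs fuel clock us 0 = start_time cs' fuel clock us 0.
Proof.
move=> t0 c0 c0' ceq.
elim: fuel clock us => [|f IH] clock us post cl0 u0s //=.
have arr0 cs1 : c_arr (nthc cs1 0) <= 0 -> has (fun i => c_arr (nthc cs1 i) <= clock) us.
  by move=> a0; apply/hasP; exists 0%N => //; apply: le_trans cl0.
rewrite !arr0 ?c0 ?c0' //.
have -> : [seq i <- us | c_arr (nthc cs' i) <= clock] =
          [seq i <- us | c_arr (nthc cs i) <= clock].
  apply: eq_in_filter => i _; case: (eqVneq i 0%N) => [->|i0]; last by rewrite ceq.
  by rewrite c0 c0' /= cl0 (le_trans t0).
set L := [seq i <- us | _].
have Lus i : i \in L -> i \in us by rewrite mem_filter => /andP[].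
rewrite -(@eq_in_pick cs); last first.
  move=> i j /Lus iu /Lus ju.
  case: (eqVneq i 0%N) => [->|i0]; case: (eqVneq j 0%N) => [->|j0].
  - by rewrite c0 c0' /cprec /= !ltxx !andbF.
  - by rewrite c0 c0' -ceq //; case: (cprec_tagged u0 t0 (post j ju j0)).
  - by rewrite c0 c0' -ceq //; case: (cprec_tagged u0 t0 (post i iu i0)).
  - by rewrite !ceq.
case E: (Defs.pick cs L) => [i|] //; case: ifP => // /negbT i0.
have iu := Lus _ (pick_mem E).
rewrite -ceq //; apply: IH.
- by move=> k /mem_rem; exact: post.
- by rewrite addr_ge0 //; case/andP: (post i iu i0).
- by apply: mem_rem_neq; rewrite // eq_sym.
Qed.

Lemma wait_time_ge0 (tau ss : seq R) t u0 w : 0 <= wait_time tau ss t u0 w.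
Proof.
rewrite /wait_time subr_ge0.
set cs := (Cust t false u0 0 :: _).
by apply: (@arr_le_start_time cs); rewrite ?size_iota.
Qed.

Definition post_opening_walkin (w : R * R * R) := (0 < w.1.1) && (0 <= w.2).

Lemma wait_time_early (tau ss : seq R) t u0 w : t <= 0 ->
  all post_opening_walkin w -> all (fun s => 0 <= s) ss ->
  wait_time tau ss t u0 w = wait_time tau ss 0 u0 w - t.
Proof.
move=> t0 wpost ss0; rewrite /wait_time subr0; congr (_ - _).
set L := (_ ++ _).
have Lpost : all post_opening L.
  rewrite all_cat !all_map; apply/andP; split.
    by apply: sub_all wpost => x /andP[a s]; rewrite /post_opening /= s a.
  elim: tau ss ss0 {L} => [|a tau IH] [|b ss] //= /andP[b0 H].
  by rewrite /post_opening /= b0 IH.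
apply: (@start_time_tagged _ _ t u0) => //; first by case.
move=> [|i] //; rewrite mem_iota /= => ilt _.
exact: (all_nthP (cdef R) Lpost).
Qed.

End Dynamics.

Section NonnegativeIntegrals.
Local Open Scope ereal_scope.
Import HBNNSimple.
Context d (T : measurableType d) (R : realType) (mu : measure T R).

(* No measurability is needed: the integral of a nonnegative function is the
   supremum of the integrals of the simple functions below it. *)
Lemma le_integral_ge0 (D : set T) (f g : T -> \bar R) :
  (forall x, D x -> 0 <= f x) -> (forall x, D x -> f x <= g x) ->
  \int[mu]_(x in D) f x <= \int[mu]_(x in D) g x.
Proof.
move=> f0 fg.
have g0 x : D x -> 0 <= g x by move=> Dx; exact: le_trans (f0 x Dx) (fg x Dx).
rewrite !ge0_integralE//; apply: ereal_sup_le => _ [h /= hf <-].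
exists h => //= x; apply: le_trans (hf x) _.
by rewrite /patch; case: ifPn => // /set_mem; exact: fg.
Qed.

Lemma ae_le_integral_ge0 (A : set T) (f g : T -> \bar R) :
  measurable A -> mu (~` A) = 0 ->
  (forall x, 0 <= f x) -> (forall x, 0 <= g x) -> (forall x, A x -> f x <= g x) ->
  \int[mu]_x f x <= \int[mu]_x g x.
Proof.
move=> mA muA f0 g0 fg.
rewrite [leLHS]ge0_integralE//; apply: ge_ereal_sup => _ [h /= hf <-].
rewrite -integralT_nnsfun (ge0_negligible_integral _ (N := ~` A)) //; last 3 first.
- exact: measurableC.
- by apply/measurable_realfun.measurable_EFinP; exact: measurable_funPT.
- by move=> x _; rewrite lee_fin.
rewrite setTD setCK; apply: (@le_trans _ _ (\int[mu]_(x in A) g x)).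
  apply: le_integral_ge0 => x Ax; first by rewrite lee_fin.
  by apply: le_trans (hf x) _; rewrite patch_setT; exact: fg.
by rewrite integral_mkcond; apply: le_integral_ge0 => x _; rewrite /patch; case: ifPn.
Qed.

End NonnegativeIntegrals.

Section ExpectedWait.
Local Open Scope ereal_scope.
Variables (R : realType) (mu : R).
Hypothesis mu_ge0 : (0 <= mu)%R.

Lemma exp_int_ge0 (g : R -> \bar R) : (forall s, (0 <= s)%R -> 0 <= g s) ->
  0 <= exp_int mu g.
Proof.
move=> g0; apply: integral_ge0 => s /= s0.
by rewrite mule_ge0 ?g0 // lee_fin mulr_ge0 // expR_ge0.
Qed.

Lemma exp_int_le (g h : R -> \bar R) : (forall s, (0 <= s)%R -> 0 <= g s) ->
  (forall s, (0 <= s)%R -> g s <= h s) -> exp_int mu g <= exp_int mu h.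
Proof.
have dens s : 0 <= (mu * expR (- (mu * s)))%:E by rewrite lee_fin mulr_ge0 // expR_ge0.
move=> g0 gh; apply: le_integral_ge0 => s /= s0.
  by rewrite mule_ge0 ?g0.
by rewrite lee_wpmul2l ?gh.
Qed.

Lemma unif_int_ge0 (g : R -> \bar R) : (forall u, 0 <= g u) -> 0 <= unif_int g.
Proof. by move=> g0; apply: integral_ge0. Qed.

Lemma unif_int_le (g h : R -> \bar R) : (forall u, 0 <= g u) ->
  (forall u, g u <= h u) -> unif_int g <= unif_int h.
Proof. by move=> g0 gh; apply: le_integral_ge0. Qed.

Lemma sched_int_ge0 m (g : seq R -> \bar R) : (forall l, 0 <= g l) ->
  0 <= sched_int mu m g.
Proof.
elim: m g => [|m IH] g g0 /=; first exact: g0.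
by apply: exp_int_ge0 => s _; apply: IH.
Qed.

Lemma sched_int_le m (g h : seq R -> \bar R) : (forall l, 0 <= g l) ->
  (forall l, all (fun s => 0 <= s)%R l -> g l <= h l) ->
  sched_int mu m g <= sched_int mu m h.
Proof.
elim: m g h => [|m IH] g h g0 gh /=; first exact: gh.
apply: exp_int_le => [s _|s s0]; first exact: sched_int_ge0.
by apply: IH => // l l0; apply: gh; rewrite /= s0.
Qed.

Variable P : probability R R.

Lemma walkin_int_ge0 n (g : seq (R * R * R) -> \bar R) : (forall w, 0 <= g w) ->
  0 <= walkin_int P mu n g.
Proof.
elim: n g => [|n IH] g g0 /=; first exact: g0.
apply: integral_ge0 => a _; apply: unif_int_ge0 => u.
by apply: exp_int_ge0 => s _; apply: IH.
Qed.

Hypothesis P_nonpos0 : P `]-oo, 0%R]%classic = 0.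

Lemma walkin_int_le n (g h : seq (R * R * R) -> \bar R) :
  (forall w, 0 <= g w) -> (forall w, 0 <= h w) ->
  (forall w, all (@post_opening_walkin R) w -> g w <= h w) ->
  walkin_int P mu n g <= walkin_int P mu n h.
Proof.
elim: n g h => [|n IH] g h g0 h0 gh /=; first exact: gh.
have inner_ge0 k (a : R) : (forall w, 0 <= k w) ->
    0 <= unif_int (fun u => exp_int mu (fun s =>
           walkin_int P mu n (fun w => k ((a, u, s) :: w)))).
  move=> k0; apply: unif_int_ge0 => u; apply: exp_int_ge0 => s _.
  exact: walkin_int_ge0.
apply: (@ae_le_integral_ge0 _ _ _ _ (~` `]-oo, 0%R : R]%classic)).
- by apply: measurableC; exact: measurable_itv.
- by rewrite setCK.
- by move=> a; exact: inner_ge0.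
- by move=> a; exact: inner_ge0.
move=> a /= a_pos; have a0 : (0 < a)%R.
  by rewrite ltNge; apply/negP => a0; apply: a_pos; rewrite /= in_itv.
apply: unif_int_le => u.
  by apply: exp_int_ge0 => s _; exact: walkin_int_ge0.
apply: exp_int_le => [s _|s s0]; first exact: walkin_int_ge0.
by apply: IH => // w wpost; apply: gh; rewrite /= wpost andbT /post_opening_walkin a0.
Qed.

Lemma Ew0_le_Ew (lambda : R) (tau : seq R) (t : R) :
  (0 <= lambda)%R -> (t <= 0)%R -> Ew lambda mu tau P 0 <= Ew lambda mu tau P t.
Proof.
move=> l0 t0; rewrite /Ew.
have wait_ge0 t' ss u w : 0 <= (wait_time tau ss t' u w)%:E.
  by rewrite lee_fin wait_time_ge0.
have integrand_ge0 n t' u : 0 <= sched_int mu (size tau) (fun ss =>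
    walkin_int P mu n (fun w => (wait_time tau ss t' u w)%:E)).
  by apply: sched_int_ge0 => ss; exact: walkin_int_ge0.
have poisson_ge0 n : 0 <= (expR (- lambda) * lambda ^+ n / (n`!)%:R)%:E.
  by rewrite lee_fin !mulr_ge0 // ?expR_ge0 ?exprn_ge0 // invr_ge0.
apply: lee_nneseries => [n _ _|n _].
  by rewrite mule_ge0 // unif_int_ge0.
rewrite lee_wpmul2l //; apply: unif_int_le => // u.
apply: sched_int_le => [ss|ss ss0]; first exact: walkin_int_ge0.
apply: walkin_int_le => // w wpost.
by rewrite lee_fin (@wait_time_early _ _ _ t) // lerDl oppr_ge0.
Qed.

End ExpectedWait.

Theorem mainTheorem6 (R : realType) (lambda mu T : R) (tau : seq R)
    (P : probability R R) :
  0 <= lambda -> 0 < mu -> 0 <= T ->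
  sorted <%R tau -> all (fun x => 0 <= x <= T) tau ->
  is_equilibrium lambda mu tau P [set t | 0 <= t <= T] ->
  P `]-oo, 0]%classic = 0%E ->
  is_equilibrium lambda mu tau P [set t | t <= T].
Proof.
move=> l0 mu0 T0 _ _ [PA [E0 [Ew_supp Ew_out]]] P0.
have itv_le_T : [set t | t <= T] = `]-oo, T]%classic.
  by apply/seteqP; split => x; rewrite /= in_itv.
have itv_0T : [set t | 0 <= t <= T] = `[0, T]%classic.
  by apply/seteqP; split => x; rewrite /= in_itv.
split.
  apply: (subset_measure0 _ _ _ PA).
  - by rewrite itv_le_T; apply: measurableC; exact: measurable_itv.
  - by rewrite itv_0T; apply: measurableC; exact: measurable_itv.
  - by move=> x /= tT /andP[_ ?]; exact: tT.
exists E0; split=> // t tT t_supp; case: (leP 0 t) => [t0|tneg].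
  by apply: Ew_out; rewrite //= t0.
apply: le_trans (Ew0_le_Ew (ltW mu0) P0 tau l0 (ltW tneg)).
have [s0|ns0] := pselect (dist_support P 0); first by rewrite Ew_supp.
by apply: Ew_out; rewrite //= lexx T0.
Qed.
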